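(* Let $d\ge1$ and $P\subseteq\mathbb R\times[d]$. The convexity space $(P,\mathcal C_{\equiv}(P))$ admits the colorful fractional Helly theorem for colorful $2$-tuples.
   Context: $[d]=\{1,\dots,d\}$. A (separated) $d$-interval is a set $I=\bigcup_{i\in[d]}\{(x,i): x\in I^{(i)}\}\subseteq\mathbb R\times[d]$ with each $I^{(i)}\subseteq\mathbb R$ convex (possibly empty). For $P\subseteq\mathbb R\times[d]$, $\mathcal C_{\equiv}(P)=\{I\cap P: I \text{ a } d\text{-interval}\}$. A convexity space $(X,\mathcal C)$ admits a colorful fractional Helly theorem for colorful $k$-tuples if there is a function $\beta:(0,1)\to(0,1)$ such that for all finite $\mathcal F_1,\dots,\mathcal F_k\subseteq\mathcal C$ of sizes $n_1,\dots,n_k$ with at least $\alpha n_1\cdots n_k$ colorful $k$-tuples $(C_1,\dots,C_k)\in\mathcal F_1\times\dots\times\mathcal F_k$ having nonempty intersection, some $\mathcal F_i$ contains a subfamily of size at least $\beta(\alpha)|\mathcal F_i|$ with nonempty intersection. *)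

From HB Require Import structures.
From mathcomp Require Import all_boot all_order all_algebra.
From mathcomp Require Import boolp classical_sets reals.
Set Implicit Arguments. Unset Strict Implicit. Unset Printing Implicit Defensive.
Import Order.TTheory GRing.Theory Num.Theory.
Local Open Scope ring_scope.
Local Open Scope classical_set_scope.

Definition convexR (R : realType) (A : set R) : Prop :=
  forall x y z, A x -> A z -> x <= y -> y <= z -> A y.

Definition d_interval_set (R : realType) (d : nat) (I : 'I_d -> set R)
  : set (R * 'I_d) := [set p | I p.2 p.1].

Definition is_d_interval (R : realType) (d : nat) (J : set (R * 'I_d)) : Prop :=
  exists I : 'I_d -> set R, (forall i, convexR (I i)) /\ J = d_interval_set I.

Definition C_equiv (R : realType) (d : nat) (P : set (R * 'I_d))
  : set (set (R * 'I_d)) :=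
  [set J | exists I, is_d_interval I /\ J = I `&` P].

(* Colorful fractional Helly for colorful 2-tuples, for a convexity space
   whose convex sets are C (subsets of the ground set).  A finite family of
   size n is an injective map 'I_n -> C. *)
Definition colorful_frac_helly2 (R : realType) (X : Type) (C : set (set X)) : Prop :=
  exists beta : R -> R,
    (forall a, 0 < a < 1 -> 0 < beta a < 1) /\
    forall a : R, 0 < a < 1 ->
    forall (n1 n2 : nat) (F1 : 'I_n1 -> set X) (F2 : 'I_n2 -> set X),
      (0 < n1)%N -> (0 < n2)%N ->
      injective F1 -> injective F2 ->
      (forall i, C (F1 i)) -> (forall j, C (F2 j)) ->
      (exists S : {set 'I_n1 * 'I_n2},
          a * n1%:R * n2%:R <= #|S|%:R /\
          forall p, p \in S -> exists x, F1 p.1 x /\ F2 p.2 x) ->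
      (exists S : {set 'I_n1},
          beta a * n1%:R <= #|S|%:R /\ exists x, forall i, i \in S -> F1 i x)
      \/
      (exists S : {set 'I_n2},
          beta a * n2%:R <= #|S|%:R /\ exists x, forall i, i \in S -> F2 i x).

From HB Require Import structures.
From mathcomp Require Import all_boot all_order all_algebra.
From mathcomp Require Import boolp classical_sets reals.
From mathcomp Require Import ring lra.
Set Implicit Arguments. Unset Strict Implicit. Unset Printing Implicit Defensive.
Import Order.TTheory GRing.Theory Num.Theory.
Local Open Scope ring_scope.

(* Take beta = alpha / (4d) and suppose that no point lies in beta n_1 sets of
   the first family nor in beta n_2 sets of the second.  Pick a witness x_p in
   F1_i ∩ F2_j for every intersecting colorful pair p = (i, j), and for every
   set and every copy c of the line the leftmost witness it received in copy c.
   If x_p lies in copy c, the leftmost witnesses a of F1_i and b of F2_j in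
   copy c both lie weakly left of x_p, so by convexity a is in F2_j or b is in
   F1_i.  Charging p to that incidence, each leftmost witness of a set of the
   first (second) family is charged fewer than beta n_2 (beta n_1) times, so
   at most 2 d beta n_1 n_2 = alpha n_1 n_2 / 2 pairs intersect, a
   contradiction. *)

Section DIntervals.
Variables (R : realType) (d : nat) (P : set (R * 'I_d)).

Lemma C_equiv_sub (A : set (R * 'I_d)) x : C_equiv P A -> A x -> P x.
Proof. by case=> I [_ ->] []. Qed.

Lemma C_equiv_between (A : set (R * 'I_d)) a b y :
  C_equiv P A -> A a -> A b -> P y -> a.2 = y.2 -> b.2 = y.2 ->
  a.1 <= y.1 <= b.1 -> A y.
Proof.
case=> _ [[I [convI ->]] ->] [Ia _] [Ib _] Py ay yb /andP[le_ay le_yb].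
split=> //; rewrite /d_interval_set /= -ay.
by apply: (convI _ a.1 _ b.1); rewrite // ay -yb.
Qed.

Lemma C_equiv_cross (A B : set (R * 'I_d)) x a b :
  C_equiv P A -> C_equiv P B -> A x -> B x -> A a -> B b ->
  a.2 = x.2 -> b.2 = x.2 -> a.1 <= x.1 -> b.1 <= x.1 -> B a \/ A b.
Proof.
move=> CA CB Ax Bx Aa Bb ax bx le_ax le_bx.
have [le_ba | lt_ab] := leP b.1 a.1.
  left; apply: (C_equiv_between CB Bb Bx (C_equiv_sub CA Aa)); rewrite ?bx //.
  by rewrite le_ba.
right; apply: (C_equiv_between CA Aa Ax (C_equiv_sub CB Bb)); rewrite ?ax //.
by rewrite (ltW lt_ab).
Qed.

End DIntervals.

Lemma exists_fiber_argmin (T : finType) (K : eqType) disp (O : orderType disp)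
    (S : {set T}) (key : T -> K) (g : T -> O) (t0 : T) :
  exists m : K -> T, forall p, p \in S ->
    [/\ m (key p) \in S, key (m (key p)) = key p & (g (m (key p)) <= g p)%O].
Proof.
have /choice[m Hm] : forall k, exists t, forall p, p \in S -> key p = k ->
    [/\ t \in S, key t = k & (g t <= g p)%O].
  move=> k; have [[p0 p0S p0k] | no_fiber] :=
    pselect (exists2 p, p \in S & key p = k); last first.
    by exists t0 => p pS pk; exfalso; apply: no_fiber; exists p.
  pose fiber := [pred p | (p \in S) && (key p == k)].
  have fiber_p0 : fiber p0 by rewrite /= p0S p0k eqxx.
  case: (arg_minP g fiber_p0) => t /andP[tS /eqP tk] tmin.
  by exists t => p pS pk; split=> //; apply: tmin; rewrite /fiber /= pS pk eqxx.
by exists m => p pS; apply: Hm.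
Qed.

Lemma C_equiv_colorful_charging (R : realType) (d : nat) (P : set (R * 'I_d))
    (I1 I2 : finType) (F1 : I1 -> set (R * 'I_d)) (F2 : I2 -> set (R * 'I_d))
    (S : {set I1 * I2}) :
  (forall i, C_equiv P (F1 i)) -> (forall j, C_equiv P (F2 j)) ->
  (forall p, p \in S -> exists x, F1 p.1 x /\ F2 p.2 x) ->
  exists (l1 : I1 * 'I_d -> R * 'I_d) (l2 : I2 * 'I_d -> R * 'I_d),
    forall p, p \in S -> exists c, F2 p.2 (l1 (p.1, c)) \/ F1 p.1 (l2 (p.2, c)).
Proof.
move=> C1 C2 witness.
have [-> | [t0 t0S]] := set_0Vmem S.
  by exists (fun ic => (0, ic.2)), (fun jc => (0, jc.2)) => p; rewrite inE.
have [x0 _] := witness t0 t0S.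
have /choice[w Hw] : forall p, exists x, p \in S -> F1 p.1 x /\ F2 p.2 x.
  by move=> p; have [/witness [x]|] := boolP (p \in S); [exists x | exists x0].
have [m1 Hm1] := exists_fiber_argmin S (fun p => (p.1, (w p).2))
  (fun p => (w p).1) t0.
have [m2 Hm2] := exists_fiber_argmin S (fun p => (p.2, (w p).2))
  (fun p => (w p).1) t0.
exists (w \o m1), (w \o m2) => p pS; exists (w p).2 => /=.
have [q1S /pair_equal_spec[q1p q1c] le_q1p] := Hm1 p pS.
have [q2S /pair_equal_spec[q2p q2c] le_q2p] := Hm2 p pS.
set q1 := m1 _ in q1S q1p q1c le_q1p *; set q2 := m2 _ in q2S q2p q2c le_q2p *.
have [Fp1 Fp2] := Hw p pS.
have Fq1 : F1 p.1 (w q1) by rewrite -q1p; exact: (Hw _ q1S).1.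
have Fq2 : F2 p.2 (w q2) by rewrite -q2p; exact: (Hw _ q2S).2.
exact: (C_equiv_cross (C1 p.1) (C2 p.2) Fp1 Fp2 Fq1 Fq2).
Qed.

Lemma card_le_sum_charges (I1 I2 K : finType) (S : {set I1 * I2})
    (e1 : I1 * K -> {set I2}) (e2 : I2 * K -> {set I1}) :
  (forall p, p \in S -> exists c, (p.2 \in e1 (p.1, c)) || (p.1 \in e2 (p.2, c))) ->
  (#|S| <= \sum_(c : K) (\sum_(i : I1) #|e1 (i, c)| + \sum_(j : I2) #|e2 (j, c)|))%N.
Proof.
move=> charged.
pose charge p c := ((p.2 \in e1 (p.1, c)) + (p.1 \in e2 (p.2, c)))%N.
have card_sum (T : finType) (A : {set T}) : #|A| = (\sum_t (t \in A))%N.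
  by rewrite -sum1_card big_mkcond.
apply: (@leq_trans (\sum_p \sum_c charge p c)).
  rewrite -sum1_card (bigID (mem S) predT) /=; apply: leq_trans (leq_addr _ _).
  apply: leq_sum => p /charged [c ch]; rewrite (bigD1 c) //=.
  apply: leq_trans (leq_addr _ _).
  by rewrite /charge; case/orP: ch => ->; [exact: leq_addr | exact: leq_addl].
rewrite exchange_big; apply: leq_sum => c _; rewrite big_split /=.
under [in X in (_ <= X)%N]eq_bigr do rewrite card_sum.
under [in X in (_ <= _ + X)%N]eq_bigr do rewrite card_sum.
by rewrite [X in (_ <= _ + X)%N]exchange_big !pair_bigA.
Qed.

Lemma card_charged_le (R : numDomainType) (I1 I2 K : finType) (S : {set I1 * I2})
    (e1 : I1 * K -> {set I2}) (e2 : I2 * K -> {set I1}) (m1 m2 : R) :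
  (forall p, p \in S -> exists c, (p.2 \in e1 (p.1, c)) || (p.1 \in e2 (p.2, c))) ->
  (forall ic, #|e1 ic|%:R <= m2) -> (forall jc, #|e2 jc|%:R <= m1) ->
  #|S|%:R <= #|K|%:R * (#|I1|%:R * m2 + #|I2|%:R * m1).
Proof.
move=> /card_le_sum_charges le_S le1 le2.
apply: le_trans (_ : _%:R <= _); first by rewrite ler_nat; exact: le_S.
rewrite natr_sum mulr_natl -sumr_const; apply: ler_sum => c _.
rewrite natrD !natr_sum !mulr_natl -!sumr_const.
by apply: lerD; apply: ler_sum.
Qed.

Lemma card_pierced_lt (R : realDomainType) (X : Type) (I : finType)
    (F : I -> set X) (N : R) :
  ~ (exists S : {set I}, N <= #|S|%:R /\ exists x, forall i, i \in S -> F i x) ->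
  forall x, #|[set i | `[< F i x >]]|%:R < N.
Proof.
move=> unpierced x; rewrite ltNge; apply/negP => le_N; apply: unpierced.
by exists [set i | `[< F i x >]]; split=> //; exists x => i; rewrite inE => /asboolP.
Qed.

Theorem lemma3 (R : realType) (d : nat) (P : set (R * 'I_d)) :
  (1 <= d)%N -> colorful_frac_helly2 R (C_equiv P).
Proof.
move=> d_ge1; have d_gt0 : 0 < d%:R :> R by rewrite ltr0n.
exists (fun a => a / (4 * d%:R)); split.
  move=> a /andP[a_gt0 a_lt1]; have d_ge1R : 1 <= d%:R :> R by rewrite ler1n.
  rewrite divr_gt0 ?mulr_gt0 //= ltr_pdivrMr ?mulr_gt0 //; lra.
move=> a /andP[a_gt0 _] n1 n2 F1 F2 n1_gt0 n2_gt0 _ _ C1 C2 [S [many_pairs pairs_meet]].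
set beta := a / (4 * d%:R).
apply: contrapT => /not_orP[unpierced1 unpierced2].
have [l1 [l2 charged]] := C_equiv_colorful_charging C1 C2 pairs_meet.
have charged_sets : forall p, p \in S -> exists c : 'I_d,
    (p.2 \in [set j | `[< F2 j (l1 (p.1, c)) >]])
    || (p.1 \in [set i | `[< F1 i (l2 (p.2, c)) >]]).
  move=> p /charged[c Fc]; exists c; rewrite !inE.
  by case: Fc => /asboolP ->; rewrite ?orbT.
have := card_charged_le charged_sets (fun ic => ltW (card_pierced_lt unpierced2 _))
  (fun jc => ltW (card_pierced_lt unpierced1 _)).
rewrite !card_ord.
have -> : d%:R * (n1%:R * (beta * n2%:R) + n2%:R * (beta * n1%:R)) =
    a * n1%:R * n2%:R / 2 :> R.
  by rewrite /beta; field; rewrite gt_eqF.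
have : 0 < a * n1%:R * n2%:R by rewrite !mulr_gt0 // ltr0n.
lra.
Qed.
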